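(* Let $\mathcal{R}$ be a probabilistic term rewrite system (PTRS) and let $\mathcal{A}(\mathcal{R})$ denote its set of canonical annotated dependency pairs. Then for every basic term $t \in \mathcal{T}_B(\mathcal{R})$ we have \[ \operatorname{edh}_{\mathcal{R}}(t) = \operatorname{edh}_{\langle \mathcal{A}(\mathcal{R}), \mathcal{A}(\mathcal{R}) \rangle}(t), \] and consequently $\iota_{\mathcal{R}} = \iota_{\langle \mathcal{A}(\mathcal{R}), \mathcal{A}(\mathcal{R}) \rangle}$.
   Context: Terms: $\Sigma$ is a finite signature, $\mathcal{V}$ a set of variables, $\mathcal{T}=\mathcal{T}(\Sigma,\mathcal{V})$ the terms; $t|_\pi$ is the subterm at position $\pi$, $t[r]_\pi$ the replacement, $\operatorname{root}(t)$ the root symbol, $\mathcal{V}(t)$ the variables of $t$, and $|t|$ the number of occurrences of function symbols and variables in $t$. A PTRS $\mathcal{R}$ is a finite set of rules $\ell \to \{p_1:r_1,\dots,p_k:r_k\}$ with $\ell\in\mathcal{T}\setminus\mathcal{V}$, $r_j\in\mathcal{T}$, $0<p_j\le 1$, $\sum_j p_j=1$ (a finite multiset of pairs), and $\mathcal{V}(r_j)\subseteq\mathcal{V}(\ell)$. Defined symbols $\mathcal{D}=\{\operatorname{root}(\ell)\mid \ell\to\mu\in\mathcal{R}\}$, constructors $\mathcal{C}=\Sigma\setminus\mathcal{D}$. A term $f(t_1,\dots,t_k)$ is basic if $f\in\mathcal{D}$ and all $t_i\in\mathcal{T}(\mathcal{C},\mathcal{V})$; $\mathcal{T}_B(\mathcal{R})$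 is the set of basic terms. Innermost rewriting: $s \to_{\mathcal{R}} \{p_1:s[r_1\sigma]_\pi,\dots,p_k:s[r_k\sigma]_\pi\}$ if there are a position $\pi$, a rule $\ell\to\{p_1:r_1,\dots,p_k:r_k\}\in\mathcal{R}$ and a substitution $\sigma$ with $s|_\pi=\ell\sigma$ and every proper subterm of $\ell\sigma$ is a normal form w.r.t. $\mathcal{R}$. A rewrite sequence tree (RST) is a (possibly infinite) directed tree with finitely many children per node, each node $v$ labeled $(p_v:t_v)$ with $p_v\in(0,1]$, $t_v\in\mathcal{T}$, root probability $1$, such that if $v$ has children $w_1,\dots,w_k$ ($k\ge1$) then $t_v \to_{\mathcal{R}} \{\tfrac{p_{w_1}}{p_v}:t_{w_1},\dots,\tfrac{p_{w_k}}{p_v}:t_{w_k}\}$ (innermost). For an RST $\mathfrak{T}$, $\operatorname{edl}(\mathfrak{T})=\sum_{v \text{ inner node}} p_v$; $\operatorname{edh}_{\mathcal{R}}(t)=\sup\{\operatorname{edl}(\mathfrak{T})\mid \mathfrak{T}$ an RST with root term $t\}$; $\operatorname{eirc}_{\mathcal{R}}(n)=\sup\{\operatorname{edh}_{\mathcal{R}}(t)\mid t\in\mathcal{T}_B(\mathcal{R}),|t|\le n\}$, and $\iota_{\mathcal{R}}=\iota(\operatorname{eirc}_{\mathcal{R}})$. Complexities: $\mathfrak{C}=\{\mathrm{Pol}_0,\mathrm{Pol}_1,\mathrm{Pol}_2,\dots,\mathrm{Exp},\mathrm{2\text{-}Exp},\mathrm{Fin},\omega\}$ ordered $\mathrm{Pol}_0\sqsubset\mathrm{Pol}_1\sqsubset\dots\sqsubset\mathrm{Exp}\sqsubset\mathrm{2\text{-}Exp}\sqsubset\mathrm{Fin}\sqsubset\omega$.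 For $f:\mathbb{N}\to\mathbb{N}\cup\{\omega\}$: $\iota(f)=\mathrm{Pol}_a$ for the smallest $a$ with $f(n)\in O(n^a)$; otherwise $\mathrm{Exp}$ if $f(n)\in O(2^{\mathrm{pol}(n)})$ for a polynomial $\mathrm{pol}$; otherwise $\mathrm{2\text{-}Exp}$ if $f(n)\in O(2^{2^{\mathrm{pol}(n)}})$; otherwise $\mathrm{Fin}$ if $f(n)\neq\omega$ for all $n$; otherwise $\omega$. Annotations: for each $f\in\mathcal{D}$ a fresh symbol $f^\sharp$ of the same arity; $\mathcal{T}^\sharp$ are terms over $\Sigma\cup\{f^\sharp\mid f\in\mathcal{D}\}$. For $t=f(t_1,\dots,t_k)$ with $f\in\mathcal{D}$, $t^\sharp=f^\sharp(t_1,\dots,t_k)$. $\flat(t)$ removes all annotations; $\sharp_{\mathcal{D}}(t)$ annotates every defined symbol of $t$; $\flat^{\uparrow}_\pi(t)$ removes all annotations strictly above position $\pi$. An annotated dependency pair (ADP) is $\ell\to\{p_1:r_1,\dots,p_k:r_k\}^m$ with $\ell\in\mathcal{T}\setminus\mathcal{V}$, $r_j\in\mathcal{T}^\sharp$, $\mathcal{V}(r_j)\subseteq\mathcal{V}(\ell)$, probabilities as before, and flag $m\in\{\mathsf{true},\mathsf{false}\}$. The canonical ADP of a rule $\ell\to\{p_1:r_1,\dots,p_k:r_k\}$ is $\ell\to\{p_1:\sharp_{\mathcal{D}}(r_1),\dots,p_k:\sharp_{\mathcal{D}}(r_k)\}^{\mathsf{true}}$ and $\mathcal{A}(\mathcal{R})$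 is the set of canonical ADPs of all rules of $\mathcal{R}$. For a set $\mathcal{P}$ of ADPs, defined symbols, constructors and basic terms are defined via the left-hand sides as for PTRSs. Rewriting with a finite set $\mathcal{P}$ of ADPs: $s\in\mathcal{T}^\sharp$ rewrites to $\{p_1:t_1,\dots,p_k:t_k\}$ if there is a position $\pi$ of $s$ carrying a defined or annotated symbol, an ADP $\ell\to\{p_1:r_1,\dots,p_k:r_k\}^m\in\mathcal{P}$ and $\sigma$ with $\flat(s|_\pi)=\ell\sigma$ and all proper subterms of $\ell\sigma$ are normal forms w.r.t. this rewrite relation, and: (at) if $m=\mathsf{true}$ and $s$ is annotated at $\pi$: $t_j=s[r_j\sigma]_\pi$; (nt) if $m=\mathsf{true}$ and not annotated at $\pi$: $t_j=s[\flat(r_j)\sigma]_\pi$; (af) if $m=\mathsf{false}$ and annotated at $\pi$: $t_j=\flat^\uparrow_\pi(s[r_j\sigma]_\pi)$; (nf) if $m=\mathsf{false}$ and not annotated: $t_j=\flat^\uparrow_\pi(s[\flat(r_j)\sigma]_\pi)$. A $\mathcal{P}$-chain tree is defined like an RST but with terms in $\mathcal{T}^\sharp$ and steps of this relation; for an inner node $v$ one records the used ADP and kind of step. For $\mathcal{S}\subseteq\mathcal{P}$, $\operatorname{edl}_{\langle\mathcal{P},\mathcal{S}\rangle}(\mathfrak{T})$ is the sum of $p_v$ over inner nodes $v$ rewritten by an (at)- or (af)-step with an ADP from $\mathcal{S}$; for a basic term $t$, $\operatorname{edh}_{\langle\mathcal{P},\mathcal{S}\rangle}(t)$ is the supremum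 of $\operatorname{edl}_{\langle\mathcal{P},\mathcal{S}\rangle}(\mathfrak{T})$ over all $\mathcal{P}$-chain trees whose root term is $t^\sharp$; $\operatorname{eirc}_{\langle\mathcal{P},\mathcal{S}\rangle}(n)=\sup\{\operatorname{edh}_{\langle\mathcal{P},\mathcal{S}\rangle}(t)\mid t$ basic w.r.t. $\mathcal{P}$, $|t|\le n\}$ and $\iota_{\langle\mathcal{P},\mathcal{S}\rangle}=\iota(\operatorname{eirc}_{\langle\mathcal{P},\mathcal{S}\rangle})$. *)

From HB Require Import structures.
From mathcomp Require Import all_boot all_order all_algebra.
From mathcomp Require Import all_classical all_reals.
From mathcomp Require Import ereal esum exp.
From Stdlib Require List Permutation.

Set Implicit Arguments.
Unset Strict Implicit.
Unset Printing Implicit Defensive.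

Import Order.TTheory GRing.Theory Num.Theory.
Local Open Scope classical_set_scope.
Local Open Scope ring_scope.

(* A single datatype is used for ordinary and annotated terms: the    *)
(* boolean flag of [Fun f b ts] says whether the symbol is f^# (b =   *)
(* true) or f (b = false).  Ordinary terms are those with no flag set.*)

Section Terms.
Variables (F : finType) (V : Type).

Inductive term : Type :=
| Var of V
| Fun of F & bool & seq term.

Fixpoint tsize (t : term) : nat :=
  match t with
  | Var _ => 1
  | Fun _ _ ts => (sumn (map tsize ts)).+1
  end.

Fixpoint vars (t : term) : seq V :=
  match t with
  | Var x => [:: x]
  | Fun _ _ ts => flatten (map vars ts)
  end.

Fixpoint subst (s : V -> term) (t : term) : term :=
  match t with
  | Var x => s x
  | Fun f b ts => Fun f b (map (subst s) ts)
  end.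

Fixpoint noann (t : term) : bool :=
  match t with
  | Var _ => true
  | Fun _ b ts => ~~ b && all noann ts
  end.

Fixpoint flat (t : term) : term :=
  match t with
  | Var x => Var x
  | Fun f _ ts => Fun f false (map flat ts)
  end.

Fixpoint sharpD (D : pred F) (t : term) : term :=
  match t with
  | Var x => Var x
  | Fun f _ ts => Fun f (f \in D) (map (sharpD D) ts)
  end.

Definition sharp_root (t : term) : term :=
  match t with
  | Var x => Var x
  | Fun f _ ts => Fun f true ts
  end.

Definition root_is (f : F) (t : term) : bool :=
  if t is Fun g _ _ then g == f else false.

Fixpoint wf (ar : F -> nat) (D : pred F) (t : term) : bool :=
  match t with
  | Var _ => true
  | Fun f b ts => [&& size ts == ar f, b ==> (f \in D) & all (wf ar D) ts]
  end.

Fixpoint constr_term (D : pred F) (t : term) : bool :=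
  match t with
  | Var _ => true
  | Fun f b ts => [&& ~~ b, f \notin D & all (constr_term D) ts]
  end.

Definition basic (D : pred F) (t : term) : bool :=
  match t with
  | Var _ => false
  | Fun f b ts => [&& ~~ b, f \in D & all (constr_term D) ts]
  end.

(* Positions are sequences of (0-based) argument indices. *)
Fixpoint subterm (t : term) (pi : seq nat) : option term :=
  match pi with
  | [::] => Some t
  | i :: pi' =>
      match t with
      | Var _ => None
      | Fun _ _ ts => if onth ts i is Some u then subterm u pi' else None
      end
  end.

Fixpoint replace (pi : seq nat) (t s : term) : term :=
  match pi with
  | [::] => s
  | i :: pi' =>
      match t with
      | Var x => Var x
      | Fun f b ts =>
          Fun f b [seq (if ju.1 == i then replace pi' ju.2 s else ju.2)
                  | ju <- zip (iota 0 (size ts)) ts]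
      end
  end.

Fixpoint flat_above (pi : seq nat) (t : term) : term :=
  match pi with
  | [::] => t
  | i :: pi' =>
      match t with
      | Var x => Var x
      | Fun f _ ts =>
          Fun f false [seq (if ju.1 == i then flat_above pi' ju.2 else ju.2)
                      | ju <- zip (iota 0 (size ts)) ts]
      end
  end.

Definition proper_subterm (u t : term) : Prop :=
  exists pi, pi <> [::] /\ subterm t pi = Some u.

End Terms.

Arguments Var {F V}.

(* A tree is a partial labelling of node addresses (seq nat): the     *)
(* i-th child of node v is (i :: v); the root is [::].                *)

Section Trees.
Variable L : Type.

Definition is_tree (lab : seq nat -> option L) : Prop :=
  [/\ lab [::] <> None,
      (forall v i, lab (i :: v) <> None -> lab v <> None) &
      (forall v, lab v <> None ->
         exists k : nat, forall i, lab (i :: v) <> None <-> (i < k)%N)].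

Definition inner (lab : seq nat -> option L) (v : seq nat) : Prop :=
  lab v <> None /\ exists i, lab (i :: v) <> None.

Definition children (lab : seq nat -> option L) (v : seq nat) (k : nat) : seq L :=
  pmap (fun i => lab (i :: v)) (iota 0 k).

End Trees.

Section PTRS.
Variables (R : realType) (F : finType) (ar : F -> nat) (V : Type).

Local Notation term := (term F V).

Record rule := Rule { lhs : term; rhs : seq (R * term) }.

Definition defsR (Rs : seq rule) : pred F :=
  fun f => has (fun r => root_is f (lhs r)) Rs.

Definition is_PTRS (Rs : seq rule) : Prop :=
  forall r, List.In r Rs ->
    [/\ exists f b ts, lhs r = Fun f b ts,
        wf ar (defsR Rs) (lhs r) && noann (lhs r),
        \sum_(pu <- rhs r) pu.1 = 1 &
        forall p u, List.In (p, u) (rhs r) ->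
          [/\ 0 < p <= 1, wf ar (defsR Rs) u && noann u &
              forall x, List.In x (vars u) -> List.In x (vars (lhs r))]].

Definition NF_R (Rs : seq rule) (u : term) : Prop :=
  ~ exists pi r (sg : V -> term),
      List.In r Rs /\ subterm u pi = Some (subst sg (lhs r)).

Definition step_R (Rs : seq rule) (s : term) (res : seq (R * term)) : Prop :=
  exists pi r (sg : V -> term),
    [/\ List.In r Rs,
        subterm s pi = Some (subst sg (lhs r)),
        (forall u, proper_subterm u (subst sg (lhs r)) -> NF_R Rs u) &
        res = [seq (pu.1, replace pi s (subst sg pu.2)) | pu <- rhs r]].

Definition lab_p (x : option (R * term)) : R :=
  if x is Some pt then pt.1 else 0.

Definition isRST (Rs : seq rule) (lab : seq nat -> option (R * term)) (t : term) : Prop :=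
  [/\ is_tree lab,
      lab [::] = Some (1, t),
      (forall v p u, lab v = Some (p, u) ->
          0 < p <= 1 /\ wf ar (defsR Rs) u && noann u) &
      (forall v p u k, lab v = Some (p, u) ->
          (forall i, lab (i :: v) <> None <-> (i < k)%N) -> (0 < k)%N ->
          exists res, step_R Rs u res /\
            Permutation.Permutation res
              [seq (pu.1 / p, pu.2) | pu <- children lab v k])].

Definition edl (lab : seq nat -> option (R * term)) : \bar R :=
  \esum_(v in [set v | inner lab v]) (lab_p (lab v))%:E.

Definition edh (Rs : seq rule) (t : term) : \bar R :=
  ereal_sup [set edl lab | lab in [set lab | isRST Rs lab t]].

Definition eirc (Rs : seq rule) (n : nat) : \bar R :=
  ereal_sup [set edh Rs t | t in
    [set t | wf ar (defsR Rs) t && basic (defsR Rs) t && (tsize t <= n)%N]].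

Record adp := ADP { alhs : term; arhs : seq (R * term); aflag : bool }.

Definition defsP (P : seq adp) : pred F :=
  fun f => has (fun a => root_is f (alhs a)) P.

Definition canonical_adp (Rs : seq rule) (r : rule) : adp :=
  ADP (lhs r) [seq (pu.1, sharpD (defsR Rs) pu.2) | pu <- rhs r] true.

Definition ADPs (Rs : seq rule) : seq adp := map (canonical_adp Rs) Rs.

Definition NF_P (P : seq adp) (u : term) : Prop :=
  ~ exists pi a (sg : V -> term) f b ts,
      [/\ List.In a P, subterm u pi = Some (Fun f b ts),
          (f \in defsP P) || b &
          flat (Fun f b ts) = subst sg (alhs a)].

Definition adp_result (m ann : bool) (pi : seq nat) (s : term)
    (sg : V -> term) (r : term) : term :=
  let t := replace pi s (subst sg (if ann then r else flat r)) in
  if m then t else flat_above pi t.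

(* step of P using ADP a; ann = whether s is annotated at the position,
   i.e. whether the step is an (at)/(af)-step *)
Definition adp_step (P : seq adp) (s : term) (a : adp) (ann : bool)
    (res : seq (R * term)) : Prop :=
  exists pi (sg : V -> term) f ts,
    [/\ List.In a P,
        subterm s pi = Some (Fun f ann ts) /\ (f \in defsP P) || ann,
        flat (Fun f ann ts) = subst sg (alhs a),
        (forall u, proper_subterm u (subst sg (alhs a)) -> NF_P P u) &
        res = [seq (pu.1, adp_result (aflag a) ann pi s sg pu.2) | pu <- arhs a]].

(* P-chain trees with root term t; info v records the ADP used at the
   inner node v and whether the step was annotated at the position *)
Definition isChainTree (P : seq adp) (lab : seq nat -> option (R * term))
    (info : seq nat -> adp * bool) (t : term) : Prop :=
  [/\ is_tree lab,
      lab [::] = Some (1, t),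
      (forall v p u, lab v = Some (p, u) -> 0 < p <= 1 /\ wf ar (defsP P) u) &
      (forall v p u k, lab v = Some (p, u) ->
          (forall i, lab (i :: v) <> None <-> (i < k)%N) -> (0 < k)%N ->
          exists res, adp_step P u (info v).1 (info v).2 res /\
            Permutation.Permutation res
              [seq (pu.1 / p, pu.2) | pu <- children lab v k])].

Definition edlPS (S : seq adp) (lab : seq nat -> option (R * term))
    (info : seq nat -> adp * bool) : \bar R :=
  \esum_(v in [set v | inner lab v /\ List.In (info v).1 S /\ (info v).2])
     (lab_p (lab v))%:E.

Definition edhPS (P S : seq adp) (t : term) : \bar R :=
  ereal_sup [set edlPS S li.1 li.2 | li in
    [set li | isChainTree P li.1 li.2 (sharp_root t)]].

Definition eircPS (P S : seq adp) (n : nat) : \bar R :=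
  ereal_sup [set edhPS P S t | t in
    [set t | wf ar (defsP P) t && basic (defsP P) t && (tsize t <= n)%N]].

End PTRS.

Inductive cplx := Pol of nat | Exp | TwoExp | Fin | Omega.

Section Iota.
Variable R : realType.

Definition bigO (f : nat -> \bar R) (g : nat -> R) : Prop :=
  exists c : R, 0 < c /\ exists N : nat,
    forall n, (N <= n)%N -> (f n <= (c * g n)%:E)%E.

Definition isPol (f : nat -> \bar R) (a : nat) : Prop :=
  bigO f (fun n => n%:R ^+ a).

Definition isExp (f : nat -> \bar R) : Prop :=
  exists p : {poly R}, bigO f (fun n => 2 `^ p.[n%:R]).

Definition is2Exp (f : nat -> \bar R) : Prop :=
  exists p : {poly R}, bigO f (fun n => 2 `^ (2 `^ p.[n%:R])).

Lemma isPol_exb (f : nat -> \bar R) :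
  (exists a, isPol f a) -> exists a, `[< isPol f a >].
Proof. by case=> a Ha; exists a; apply/asboolP. Qed.

Definition iotaC (f : nat -> \bar R) : cplx :=
  match pselect (exists a, isPol f a) with
  | left H => Pol (ex_minn (isPol_exb H))
  | right _ =>
      if pselect (isExp f) then Exp
      else if pselect (is2Exp f) then TwoExp
      else if pselect (forall n, f n != +oo%E) then Fin
      else Omega
  end.

End Iota.

(* Erasing annotations turns an A(R)-chain tree into a rewrite sequence tree
   of R: an innermost step with a canonical ADP erases to the innermost R-step
   with the same rule, and the (at)-steps counted by the chain tree are among
   the inner nodes counted by the RST.  Conversely, an RST is lifted top-down
   while keeping annotated every subterm whose root is defined and whose
   erasure is not an R-normal form.  The innermost redex of each R-step is then
   annotated, so the step lifts to an (at)-step with the canonical ADP of its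
   rule; the invariant survives because sharp_D annotates the whole right-hand
   side and the substituted normal forms need no annotation.  Every inner node
   of the lifted tree is thus counted, so the two expected derivation heights
   agree on basic terms, and so do the complexity functions built from them. *)

From Pilot Require Import Defs.
From mathcomp Require Import all_boot all_order all_algebra.
From mathcomp Require Import all_classical all_reals.
From mathcomp Require Import ereal esum exp.
From Stdlib Require List Permutation.
(* Re-import [Defs] so that [Fun] is the term constructor, not the structure
   [Fun] of MathComp's functions.v. *)
Import Defs.

Set Implicit Arguments.
Unset Strict Implicit.
Unset Printing Implicit Defensive.

Import Order.TTheory GRing.Theory Num.Theory.
Local Open Scope classical_set_scope.
Local Open Scope ring_scope.

Section ListIn.
Variables A B : Type.
Implicit Types (s : seq A) (f g : A -> B).

Lemma map_List_map f s : map f s = List.map f s.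
Proof. by elim: s => //= x s ->. Qed.

Lemma cat_List_app s1 s2 : s1 ++ s2 = List.app s1 s2.
Proof. by elim: s1 => //= x s1 ->. Qed.

Lemma eq_map_In f g s : (forall x, List.In x s -> f x = g x) -> map f s = map g s.
Proof. by rewrite !map_List_map; exact: List.map_ext_in. Qed.

Lemma In_map_iff f s y : List.In y (map f s) <-> exists x, f x = y /\ List.In x s.
Proof. by rewrite map_List_map; exact: List.in_map_iff. Qed.

Lemma all_In (p : pred A) s : all p s <-> forall x, List.In x s -> p x.
Proof.
elim: s => //= x s IH; split=> [/andP [px /IH ps] y [<-|/ps]|H] //.
by rewrite H /=; [apply/IH => y sy; apply: H; right | left].
Qed.

Lemma In_has (p : pred A) s x : List.In x s -> p x -> has p s.
Proof. by elim: s => //= y s IH [<- ->|/IH H /H ->]; rewrite ?orbT. Qed.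

Lemma onth_In s i x : onth s i = Some x -> List.In x s.
Proof. by elim: s i => [|y s IH] [|i] //= => [[<-]|/IH]; [left|right]. Qed.

Lemma In_onth s x : List.In x s -> exists i, onth s i = Some x.
Proof. by elim: s => //= y s IH [->|/IH [i]]; [exists 0 | exists i.+1]. Qed.

Lemma In_nth (d : A) s i : (i < size s)%N -> List.In (nth d s i) s.
Proof. by elim: s i => [|x s IH] [|i] //= ?; [left | right; apply: IH]. Qed.

End ListIn.

Lemma Permutation_map_seq (A B : Type) (f : A -> B) (s1 s2 : seq A) :
  Permutation.Permutation s1 s2 -> Permutation.Permutation (map f s1) (map f s2).
Proof. by rewrite !map_List_map; exact: Permutation.Permutation_map. Qed.

Lemma pmap_iota_nth (A : Type) (g : nat -> option A) k m (d : A) :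
  (forall i, (i < k)%N -> g (m + i)%N <> None) ->
  size (pmap g (iota m k)) = k /\
  forall i, (i < k)%N -> g (m + i)%N = Some (nth d (pmap g (iota m k)) i).
Proof.
elim: k m => [|k IH] m gS //=.
case E: (g m) => [x|]; last by case: (gS 0%N); rewrite ?addn0.
have [sz nth_g] : size (pmap g (iota m.+1 k)) = k /\
    forall i, (i < k)%N -> g (m.+1 + i)%N = Some (nth d (pmap g (iota m.+1 k)) i).
  by apply: IH => i ik; rewrite addSnnS; apply: gS.
split; first by rewrite /= sz.
by case=> [|i] ik /=; rewrite ?addn0 // -nth_g // addSnnS.
Qed.

Lemma bound_iff_unique (P : nat -> Prop) k k' :
  (forall i, P i <-> (i < k)%N) -> (forall i, P i <-> (i < k')%N) -> k = k'.
Proof.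
move=> Pk Pk'; apply/eqP; rewrite eqn_leq.
by apply/andP; split; rewrite leqNgt; apply/negP => lt;
  [have := proj1 (Pk' _) (proj2 (Pk _) lt) | have := proj1 (Pk _) (proj2 (Pk' _) lt)];
  rewrite ltnn.
Qed.

Section MapAt.
Variable A : Type.

Definition map_at (n i : nat) (g : A -> A) (s : seq A) : seq A :=
  [seq (if ju.1 == i then g ju.2 else ju.2) | ju <- zip (iota n (size s)) s].

Lemma size_map_at n i g s : size (map_at n i g s) = size s.
Proof. by rewrite size_map size_zip size_iota minnn. Qed.

Lemma In_map_at n i g s x : List.In x (map_at n i g s) ->
  List.In x s \/ exists u, [/\ onth s (i - n) = Some u, (n <= i)%N & x = g u].
Proof.
elim: s n => [|y s IH] n //=.
have IHn := IH n.+1; rewrite /map_at /= in IHn *.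
case: eqP => [ni|_] [<-|/IHn [xs|[u [su ni' ->]]]].
- by right; exists y; rewrite ni subnn.
- by left; right.
- by move: ni'; rewrite ni ltnn.
- by left; left.
- by left; right.
- right; exists u; split=> //; last exact: ltnW.
  by rewrite -(subnSK ni').
Qed.

End MapAt.

Lemma map_map_at (A B : Type) n i (g : A -> A) (g' : B -> B) (h : A -> B) s :
  (forall u, h (g u) = g' (h u)) -> map h (map_at n i g s) = map_at n i g' (map h s).
Proof.
move=> hg; elim: s n => [|y s IH] n //=; rewrite /map_at /=.
by have := IH n.+1; rewrite /map_at => ->; case: (n == i); rewrite ?hg.
Qed.

Section TermTheory.
Variables (F : finType) (V : Type).
Local Notation term := (term F V).
Implicit Types (t u : term) (ts : seq term) (sg : V -> term) (D : pred F).

Lemma term_ind_In (P : term -> Prop) :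
  (forall x, P (Var x)) ->
  (forall f b ts, (forall u, List.In u ts -> P u) -> P (Fun f b ts)) ->
  forall t, P t.
Proof.
move=> HV HF; fix IH 1 => t; case: t => [x|f b ts]; first exact: HV.
apply: HF; elim: ts => [|u ts IHts] w; first by case.
by case=> [<-|wts]; [exact: IH | exact: IHts].
Qed.

Lemma In_vars_Fun f b ts x :
  List.In x (vars (Fun f b ts)) <-> exists u, List.In u ts /\ List.In x (vars u).
Proof.
elim: ts => [|u ts IH] /=; first by split=> [|[? []]].
rewrite cat_List_app List.in_app_iff IH; split.
  by case=> [xu|[w [wts xw]]]; [exists u; split; [left|] | exists w; split; [right|]].
by case=> w [[<-|wts] xw]; [left | right; exists w].
Qed.

Lemma subterm_cat t p q u w :
  subterm t p = Some u -> subterm u q = Some w -> subterm t (p ++ q) = Some w.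
Proof.
elim: p t => [|i p IH] t /=; first by case=> ->.
by case: t => // f b ts; case: (onth ts i) => // v; apply: IH.
Qed.

Lemma subterm_closed (P : term -> bool) t p u :
  (forall f b ts, P (Fun f b ts) -> all P ts) ->
  P t -> subterm t p = Some u -> P u.
Proof.
move=> Pdown; elim: p t => [|i p IH] t /=; first by move=> ? [<-].
case: t => // f b ts /Pdown /all_In Pts; case E: (onth ts i) => [v|] //.
by apply: IH; apply: Pts; exact: onth_In E.
Qed.

Lemma subterm_subst_var sg t x : List.In x (vars t) ->
  exists q, subterm t q = Some (Var x) /\ subterm (subst sg t) q = Some (sg x).
Proof.
elim/term_ind_In: t => [y|f b ts IH]; first by case=> [<-|[]]; exists [::].
case/In_vars_Fun=> u [uts xu]; have [q [Hq Hsq]] := IH _ uts xu.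
have [i Hi] := In_onth uts.
by exists (i :: q) => /=; rewrite Hi onth_map Hi.
Qed.

Lemma noann_subterm t p u : noann t -> subterm t p = Some u -> noann u.
Proof. by apply: subterm_closed => f b ts /andP []. Qed.

Lemma wf_subterm ar D t p u : wf ar D t -> subterm t p = Some u -> wf ar D u.
Proof. by apply: subterm_closed => f b ts /and3P []. Qed.

Lemma noann_flat t : noann (flat t).
Proof.
elim/term_ind_In: t => //= f b ts IH.
by apply/all_In => _ /In_map_iff [u [<- /IH]].
Qed.

Lemma flat_noann t : noann t -> flat t = t.
Proof.
elim/term_ind_In: t => //= f b ts IH /andP [/negbTE -> /all_In nts].
by congr Fun; rewrite -[RHS]map_id; apply: eq_map_In => u uts; apply/IH/nts.
Qed.

Lemma flatK t : flat (flat t) = flat t.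
Proof. exact/flat_noann/noann_flat. Qed.

Lemma flat_sharpD D t : flat (sharpD D t) = flat t.
Proof.
by elim/term_ind_In: t => //= f b ts IH; congr Fun; rewrite -map_comp; exact: eq_map_In.
Qed.

Lemma vars_sharpD D t : vars (sharpD D t) = vars t.
Proof.
by elim/term_ind_In: t => //= f b ts IH; rewrite -map_comp (eq_map_In IH).
Qed.

Lemma flat_subst sg t : flat (subst sg t) = subst (fun x => flat (sg x)) (flat t).
Proof.
by elim/term_ind_In: t => //= f b ts IH; congr Fun; rewrite -!map_comp; exact: eq_map_In.
Qed.

Lemma flat_subterm t p : subterm (flat t) p = omap (@flat F V) (subterm t p).
Proof.
by elim: p t => [|i p IH] [x|f b ts] //=; rewrite onth_map; case: (onth ts i).
Qed.

Lemma eq_subst_vars sg sg' t :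
  (forall x, List.In x (vars t) -> sg x = sg' x) -> subst sg t = subst sg' t.
Proof.
elim/term_ind_In: t => [x H|f b ts IH H] /=; first by apply: H; left.
congr Fun; apply: eq_map_In => u uts; apply: IH => // x xu.
by apply: H; apply/(In_vars_Fun f b); exists u.
Qed.

Lemma subst_var_closed (P : term -> bool) sg t x :
  (forall f b ts, P (Fun f b ts) -> all P ts) ->
  P (subst sg t) -> List.In x (vars t) -> P (sg x).
Proof.
move=> Pdown Pt /(subterm_subst_var sg) [q [_ Hq]].
exact: subterm_closed Pdown Pt Hq.
Qed.

Lemma noann_subst_var sg t x :
  noann (subst sg t) -> List.In x (vars t) -> noann (sg x).
Proof. by apply: subst_var_closed => f b ts /andP []. Qed.

Lemma wf_subst_var ar D sg t x :
  wf ar D (subst sg t) -> List.In x (vars t) -> wf ar D (sg x).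
Proof. by apply: subst_var_closed => f b ts /and3P []. Qed.

Lemma wf_subst ar D sg t :
  wf ar D t -> (forall x, List.In x (vars t) -> wf ar D (sg x)) ->
  wf ar D (subst sg t).
Proof.
elim/term_ind_In: t => /= [x _ H|f b ts IH /and3P [/eqP sts -> /all_In wts] H];
  first by apply: H; left.
rewrite size_map sts eqxx /=; apply/all_In => _ /In_map_iff [u [<- uts]].
by apply: (IH _ uts (wts _ uts)) => x xu; apply: H; apply/(In_vars_Fun f b); exists u.
Qed.

Lemma wf_sharpD ar D t : wf ar D t -> noann t -> wf ar D (sharpD D t).
Proof.
elim/term_ind_In: t => //= f b ts IH /and3P [/eqP sts _ /all_In wts] /andP [_ /all_In nts].
rewrite size_map sts eqxx implybb /=; apply/all_In => _ /In_map_iff [u [<- uts]].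
exact: IH uts (wts _ uts) (nts _ uts).
Qed.

Lemma wf_flat ar D t : wf ar D t -> wf ar D (flat t).
Proof.
elim/term_ind_In: t => //= f b ts IH /and3P [/eqP sts _ /all_In wts].
rewrite size_map sts eqxx /=; apply/all_In => _ /In_map_iff [u [<- uts]].
exact: IH uts (wts _ uts).
Qed.

Lemma noann_constr D t : constr_term D t -> noann t.
Proof.
elim/term_ind_In: t => //= f b ts IH /and3P [-> _ /all_In cts] /=.
by apply/all_In => u uts; apply/IH/cts.
Qed.

Lemma flat_sharp_root D t : basic D t -> flat (sharp_root t) = t.
Proof.
case: t => // f b ts /and3P [/negbTE -> _ /all_In cts] /=; congr Fun.
rewrite -[RHS]map_id; apply: eq_map_In => u uts.
exact/flat_noann/(noann_constr (cts _ uts)).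
Qed.

Lemma replace_Fun i p f b ts (Y : term) :
  replace (i :: p) (Fun f b ts) Y = Fun f b (map_at 0 i (fun u => replace p u Y) ts).
Proof. by []. Qed.

Lemma flat_replace p (S Y : term) : flat (replace p S Y) = replace p (flat S) (flat Y).
Proof.
elim: p S => [|i p IH] [x|f b ts] //.
by rewrite replace_Fun /= (map_map_at _ _ (g' := fun u => replace p u (flat Y))).
Qed.

Lemma wf_replace ar D p (S Y : term) : wf ar D S -> wf ar D Y -> wf ar D (replace p S Y).
Proof.
elim: p S => [|i p IH] [x|f b ts] //; rewrite replace_Fun /=.
case/and3P=> /eqP sts -> /all_In wts wY; rewrite size_map_at sts eqxx /=.
apply/all_In => x xin; case: (In_map_at xin) => [/wts //|[u [su _ ->]]].
by apply: IH wY; apply: wts; exact: onth_In su.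
Qed.

End TermTheory.

Lemma flat_adp_result_sharpD (F : finType) (V : Type) (D : pred F) ann pi
    (S v : term F V) sg :
  noann v -> (forall x, List.In x (vars v) -> noann (sg x)) ->
  flat (adp_result true ann pi S sg (sharpD D v)) = replace pi (flat S) (subst sg v).
Proof.
move=> nv nsg; rewrite /adp_result flat_replace flat_subst.
have -> : flat (if ann then sharpD D v else flat (sharpD D v)) = v.
  by case: ann; rewrite ?flatK flat_sharpD flat_noann.
by congr replace; apply: eq_subst_vars => x /nsg /flat_noann.
Qed.

Section CanonicalADPs.
Variables (R : realType) (F : finType) (ar : F -> nat) (V : Type).
Variable Rs : seq (rule R F V).
Local Notation term := (term F V).
Local Notation D := (defsR Rs).
Local Notation P := (ADPs Rs).

Lemma defsP_ADPs : defsP P = D.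
Proof. by apply: funext => f; rewrite /defsP /ADPs has_map. Qed.

Lemma In_ADPs a : List.In a P <-> exists r, a = canonical_adp Rs r /\ List.In r Rs.
Proof. by rewrite In_map_iff; split=> -[r [ar' Rr]]; exists r. Qed.

Lemma NF_R_subterm u q w : NF_R Rs u -> subterm u q = Some w -> NF_R Rs w.
Proof.
move=> nfu uq [pi [r [sg [Rr wpi]]]]; apply: nfu.
by exists (q ++ pi), r, sg; split=> //; exact: subterm_cat uq wpi.
Qed.

Lemma NF_R_subst_var sg f b us x :
  (forall u, proper_subterm u (subst sg (Fun f b us)) -> NF_R Rs u) ->
  List.In x (vars (Fun f b us)) -> NF_R Rs (sg x).
Proof.
move=> nf_below /(subterm_subst_var sg) [q [qx sqx]]; apply: nf_below.
by exists q; split=> // q0; move: qx; rewrite q0.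
Qed.

Lemma NF_R_NF_P u : noann u -> NF_R Rs u -> NF_P P u.
Proof.
move=> nu nfu [pi [a [sg [f [b [ts [/In_ADPs [r [-> Rr]] upi _ flatE]]]]]]].
apply: nfu; exists pi, r, sg; split=> //.
by rewrite upi -flatE flat_noann //; exact: noann_subterm nu upi.
Qed.

Hypothesis HP : is_PTRS ar Rs.

Lemma PTRS_lhs r : List.In r Rs -> exists f us, lhs r = Fun f false us /\ f \in D.
Proof.
move=> Rr; have [[f [b [us lhsE]]] /andP [_ nl] _ _] := @HP r Rr.
move: nl; rewrite lhsE /= => /andP [/negbTE bF _]; exists f, us.
split; first by rewrite bF.
by rewrite unfold_in; apply: (In_has Rr); rewrite lhsE /= eqxx.
Qed.

Lemma NF_P_NF_R u : NF_P P u -> NF_R Rs u.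
Proof.
move=> nfu [pi [r [sg [Rr upi]]]]; apply: nfu.
have [f [us [lhsE fD]]] := PTRS_lhs Rr.
have [_ /andP [_ nl] _ _] := @HP r Rr.
exists pi, (canonical_adp Rs r), (fun x => flat (sg x)), f, false, (map (subst sg) us).
split; first by apply/In_ADPs; exists r.
- by rewrite upi lhsE.
- by rewrite defsP_ADPs fD.
- by rewrite -[Fun f false _]/(subst sg (Fun f false us)) -lhsE flat_subst flat_noann.
Qed.

End CanonicalADPs.

Section Lifting.
Variables (R : realType) (F : finType) (ar : F -> nat) (V : Type).
Variable Rs : seq (rule R F V).
Local Notation term := (term F V).
Local Notation D := (defsR Rs).
Local Notation P := (ADPs Rs).

(* The invariant of the lifting: it makes every innermost redex annotated. *)
Fixpoint redex_annotated (S : term) : bool :=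
  match S with
  | Var _ => true
  | Fun f b ts =>
      ((f \in D) && ~~ `[< NF_R Rs (flat (Fun f b ts)) >] ==> b) &&
      all redex_annotated ts
  end.

Lemma redex_annotated_root f b ts :
  redex_annotated (Fun f b ts) -> f \in D -> ~ NF_R Rs (flat (Fun f b ts)) -> b.
Proof. by case/andP=> /implyP + _ fD nf; apply; rewrite fD; apply/asboolPn. Qed.

Lemma redex_annotated_subterm S q X :
  redex_annotated S -> subterm S q = Some X -> redex_annotated X.
Proof. by apply: subterm_closed => f b ts /andP []. Qed.

Lemma redex_annotated_NF u : noann u -> NF_R Rs u -> redex_annotated u.
Proof.
elim/term_ind_In: u => //= f b ts IH nu nfu.
have -> : `[< NF_R Rs (Fun f false (map (@flat F V) ts)) >] = true.
  apply/asboolP; rewrite -[Fun f false _]/(flat (Fun f b ts)).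
  by rewrite (@flat_noann _ _ (Fun f b ts) nu).
move: nu => /andP [_ /all_In nts]; rewrite andbF /=; apply/all_In => u uts.
apply: IH (nts _ uts) _ => //; have [i ui] := In_onth uts.
by apply: (NF_R_subterm (q := [:: i])) nfu _; rewrite /= ui.
Qed.

Lemma redex_annotated_constr u : constr_term D u -> redex_annotated u.
Proof.
elim/term_ind_In: u => //= f b ts IH /and3P [_ /negbTE -> /all_In cts] /=.
by apply/all_In => u uts; apply/IH/cts.
Qed.

Lemma redex_annotated_replace p S Y X :
  redex_annotated S -> redex_annotated Y -> subterm S p = Some X ->
  ~ NF_R Rs (flat X) -> redex_annotated (replace p S Y).
Proof.
elim: p S => [|i p IH] [x|f b ts] // aS aY; rewrite replace_Fun /=.
case E: (onth ts i) => [u|] // uX nfX; rewrite (_ : _ ==> b); last first.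
  case: b aS => [|/andP [/implyP aF _]]; rewrite ?implybT //.
  have fD : f \notin D.
    apply/negP => fD; suff : false by []; apply: aF.
    rewrite fD /=; apply/asboolPn => nf; apply: nfX.
    by apply: (NF_R_subterm (q := i :: p)) nf _; rewrite /= onth_map E /= flat_subterm uX.
  by rewrite (negbTE fD).
move: aS => /andP [_ /all_In ats]; apply/all_In => x xin.
case: (In_map_at xin) => [/ats //|[v [+ _ ->]]]; rewrite subn0 E => -[<-].
exact: IH (ats _ (onth_In E)) aY uX nfX.
Qed.

Lemma redex_annotated_subst_sharpD sg r :
  (forall x, List.In x (vars r) -> redex_annotated (sg x)) ->
  redex_annotated (subst sg (sharpD D r)).
Proof.
elim/term_ind_In: r => [x|f b ts IH] asg /=; first by apply: asg; left.
rewrite (_ : _ ==> _); last by case: (f \in D); rewrite ?implybT.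
apply/all_In => _ /In_map_iff [_ [<- /In_map_iff [u [<- uts]]]].
by apply: IH => // x xu; apply: asg; apply/(In_vars_Fun f b); exists u.
Qed.

Definition lifted (S : term) : bool := redex_annotated S && wf ar D S.

Lemma lifted_sharp_root t : wf ar D t && basic D t -> lifted (sharp_root t).
Proof.
case: t => // f b ts /andP [/and3P [sts _ wts] /and3P [_ fD /all_In cts]].
rewrite /lifted /= implybT sts fD wts !andbT; apply/all_In => u uts.
exact/redex_annotated_constr/cts.
Qed.

Lemma lifted_replace_rhs S pi X sg v :
  lifted S -> subterm S pi = Some X -> ~ NF_R Rs (flat X) -> wf ar D v -> noann v ->
  (forall x, List.In x (vars v) -> [/\ noann (sg x), NF_R Rs (sg x) & wf ar D (sg x)]) ->
  lifted (replace pi S (subst sg (sharpD D v))).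
Proof.
case/andP=> aS wS SX redex wv nv sg_ok; apply/andP; split.
  apply: redex_annotated_replace aS _ SX redex; apply: redex_annotated_subst_sharpD.
  by move=> x /sg_ok [nx nfx _]; exact: redex_annotated_NF.
apply: wf_replace wS _; apply: wf_subst; first exact: wf_sharpD.
by rewrite vars_sharpD => x /sg_ok [].
Qed.

Definition flat_pt (pu : R * term) : R * term := (pu.1, flat pu.2).

End Lifting.

Section Steps.
Variables (R : realType) (F : finType) (ar : F -> nat) (V : Type).
Variable Rs : seq (rule R F V).
Hypothesis HP : is_PTRS ar Rs.
Local Notation term := (term F V).
Local Notation D := (defsR Rs).
Local Notation P := (ADPs Rs).

Lemma annotated_redex S pi sg f us :
  redex_annotated Rs S -> f \in D -> ~ NF_R Rs (subst sg (Fun f false us)) ->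
  subterm (flat S) pi = Some (subst sg (Fun f false us)) ->
  exists ts, subterm S pi = Some (Fun f true ts) /\
             flat (Fun f true ts) = subst sg (Fun f false us).
Proof.
move=> aS fD redex; rewrite flat_subterm.
case E: (subterm S pi) => [[x|g b ts]|] //= -[gf flatE]; subst g.
have -> : b.
  by apply: (redex_annotated_root (redex_annotated_subterm aS E)) => //=; rewrite flatE.
by exists ts; rewrite /= flatE.
Qed.

Lemma step_R_lift S res : lifted ar Rs S -> step_R Rs (flat S) res ->
  exists a res', [/\ List.In a P, adp_step P S a true res',
    map (@flat_pt R F V) res' = res & forall pu, List.In pu res' -> lifted ar Rs pu.2].
Proof.
move=> liftS [pi [r [sg [Rr Spi nf_below ->]]]]; case/andP: (liftS) => aS wS.
have [f [us [lhsE fD]]] := PTRS_lhs HP Rr.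
have [_ _ _ rhs_ok] := @HP r Rr.
have redex : ~ NF_R Rs (subst sg (lhs r)) by apply; exists [::], r, sg.
have wl : wf ar D (subst sg (lhs r)) by apply: wf_subterm Spi; exact: wf_flat.
have nl : noann (subst sg (lhs r)) by apply: noann_subterm Spi; exact: noann_flat.
have sg_ok x : List.In x (vars (lhs r)) ->
    [/\ noann (sg x), NF_R Rs (sg x) & wf ar D (sg x)].
  move=> xl; split; [exact: noann_subst_var xl | | exact: wf_subst_var xl].
  by move: xl; rewrite lhsE; apply: NF_R_subst_var; rewrite -lhsE.
rewrite lhsE in Spi redex.
have [ts [Spi' flatE]] := annotated_redex aS fD redex Spi.
rewrite -lhsE in flatE.
exists (canonical_adp Rs r),
  [seq (pu.1, adp_result true true pi S sg pu.2) | pu <- arhs (canonical_adp Rs r)].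
have aR : List.In (canonical_adp Rs r) P by apply/In_ADPs; exists r.
split=> //.
- exists pi, sg, f, ts; split; rewrite ?orbT //.
  move=> u [q [qnil uq]]; apply: NF_R_NF_P; first exact: noann_subterm nl uq.
  by apply: nf_below; exists q.
- rewrite /= -!map_comp; apply: eq_map_In => -[p v] /rhs_ok [_ /andP [_ nv] vl].
  have nsg x : List.In x (vars v) -> noann (sg x) by move=> /vl /sg_ok [].
  by congr pair; exact: (flat_adp_result_sharpD D true pi S nv nsg).
- move=> _ /In_map_iff [_ [<- /In_map_iff [[p v] [<- /rhs_ok [_ /andP [wv nv] vl]]]]].
  apply: (lifted_replace_rhs liftS Spi') => //; first by rewrite flatE lhsE.
  by move=> x /vl /sg_ok.
Qed.

Lemma adp_step_flat u a ann res :
  adp_step P u a ann res -> step_R Rs (flat u) (map (@flat_pt R F V) res).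
Proof.
move=> [pi [sg [f [ts [/In_ADPs [r [-> Rr]] [upi _] flatE nf_below ->]]]]].
have [_ _ _ rhs_ok] := @HP r Rr.
have nl : noann (subst sg (lhs r)) by rewrite -[subst _ _]flatE noann_flat.
exists pi, r, sg; split=> //.
- by rewrite flat_subterm upi -[subst _ _]flatE.
- by move=> w /nf_below /(NF_P_NF_R HP).
- rewrite /= -!map_comp; apply: eq_map_In => -[p v] /rhs_ok [_ /andP [_ nv] vl].
  have nsg x : List.In x (vars v) -> noann (sg x) by move=> /vl; exact: noann_subst_var.
  by congr pair; exact: (flat_adp_result_sharpD D ann pi u nv nsg).
Qed.

End Steps.

Lemma esum_subset (R : realType) (T : choiceType) (A B : set T) (a : T -> \bar R) :
  A `<=` B -> (\esum_(i in A) a i <= \esum_(i in B) a i)%E.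
Proof.
move=> AB; rewrite ge_ereal_sup => //= _ [X [finX XA]] <-; apply: esum_ge.
by exists X => //; split=> //; exact: subset_trans XA AB.
Qed.

Section Relabel.
Variables L L' : Type.
Implicit Types lab : seq nat -> option L.

Definition relabel (g : seq nat -> L -> L') lab : seq nat -> option L' :=
  fun v => omap (g v) (lab v).

Lemma relabel_None g lab v : relabel g lab v <> None <-> lab v <> None.
Proof. by rewrite /relabel; case: (lab v). Qed.

Lemma relabel_children g lab v k :
  (forall i, relabel g lab (i :: v) <> None <-> (i < k)%N) <->
  (forall i, lab (i :: v) <> None <-> (i < k)%N).
Proof. by split=> H i; rewrite -H relabel_None. Qed.

Lemma is_tree_relabel g lab : is_tree lab -> is_tree (relabel g lab).
Proof.
case=> root_ok parent_ok count_ok; split.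
- exact/relabel_None.
- by move=> v i /relabel_None /parent_ok /relabel_None.
- move=> v /relabel_None /count_ok [k Hk].
  by exists k; apply/(relabel_children g lab v k).
Qed.

Lemma inner_relabel g lab v : inner (relabel g lab) v <-> inner lab v.
Proof.
by split=> -[/relabel_None vl [i /relabel_None il]]; split=> //; exists i.
Qed.

Lemma children_relabel (g : L -> L') lab v k :
  children (relabel (fun _ => g) lab) v k = map g (children lab v k).
Proof. by rewrite /children /relabel; elim: (iota 0 k) => //= i s ->; case: (lab _). Qed.

Lemma children_nth lab v k (d : L) :
  (forall i, lab (i :: v) <> None <-> (i < k)%N) ->
  size (children lab v k) = k /\
  forall i, (i < k)%N -> lab (i :: v) = Some (nth d (children lab v k) i).
Proof. by move=> kids; apply: (pmap_iota_nth (g := fun i => lab (i :: v))) => i /kids. Qed.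

End Relabel.

Lemma lab_p_relabel (R : realType) (F : finType) (V : Type)
    (g : seq nat -> R * term F V -> R * term F V) lab v :
  (forall w pu, (g w pu).1 = pu.1) -> lab_p (relabel g lab v) = lab_p (lab v).
Proof. by move=> g1; rewrite /relabel; case: (lab v) => //= pu; rewrite g1. Qed.

Section FlatChainTrees.
Variables (R : realType) (F : finType) (ar : F -> nat) (V : Type).
Variable Rs : seq (rule R F V).
Hypothesis HP : is_PTRS ar Rs.
Local Notation D := (defsR Rs).
Local Notation P := (ADPs Rs).
Local Notation flat_tree := (relabel (fun _ => @flat_pt R F V)).

Lemma isRST_flat_chain t lab info : basic D t ->
  isChainTree ar P lab info (sharp_root t) -> isRST ar Rs (flat_tree lab) t.
Proof.
move=> bt [tree root lab_ok step_ok]; split.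
- exact: is_tree_relabel.
- by rewrite /relabel root /flat_pt /= (flat_sharp_root bt).
- move=> v p u; rewrite /relabel; case E: (lab v) => [[p' u']|] //= [<- <-].
  have [p01 wu] := lab_ok _ _ _ E; split=> //; rewrite noann_flat andbT.
  by apply: wf_flat; rewrite -(defsP_ADPs Rs).
- move=> v p u k; rewrite {1}/relabel; case E: (lab v) => [[p' u']|] //= [<- <-].
  move=> /relabel_children kids k0; have [res [st perm]] := step_ok _ _ _ _ E kids k0.
  exists (map (@flat_pt R F V) res); split; first exact: (adp_step_flat HP st).
  suff -> : [seq (pu.1 / p', pu.2) | pu <- children (flat_tree lab) v k] =
      map (@flat_pt R F V) [seq (pu.1 / p', pu.2) | pu <- children lab v k].
    exact: Permutation_map_seq.
  by rewrite children_relabel -!map_comp.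
Qed.

Lemma edlPS_le_edl_flat S lab info : (edlPS S lab info <= edl (flat_tree lab))%E.
Proof.
rewrite /edl (eq_esum (b := fun v => (lab_p (lab v))%:E)); last first.
  by move=> v _; rewrite lab_p_relabel.
by apply: esum_subset => v [vin _] /=; apply/inner_relabel.
Qed.

Lemma edhPS_ADPs_le_edh t : basic D t -> (edhPS ar P P t <= edh ar Rs t)%E.
Proof.
move=> bt; apply: ge_ereal_sup => _ [[lab info] chain <-].
apply: le_trans (edlPS_le_edl_flat _ lab info) _; apply: ereal_sup_ubound.
by exists (flat_tree lab) => //; exact: isRST_flat_chain chain.
Qed.

End FlatChainTrees.

Section LiftRST.
Variables (R : realType) (F : finType) (ar : F -> nat) (V : Type).
Variable Rs : seq (rule R F V).
Hypothesis HP : is_PTRS ar Rs.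
Local Notation term := (term F V).
Local Notation D := (defsR Rs).
Local Notation P := (ADPs Rs).
Variables (t : term) (lab : seq nat -> option (R * term)).
Hypothesis HT : isRST ar Rs lab t.

Definition lifts (S s : term) : Prop := flat S = s /\ lifted ar Rs S.

(* [head 0 w] is the index of the child [w] of [v], so that the i-th child
   gets the term [As]_i. *)
Definition lifted_children (As : seq term) v k : seq (R * term) :=
  children (relabel (fun w pu => (pu.1, nth t As (head 0%N w))) lab) v k.

(* [d] consists of the ADP and the annotated child terms lifting the step at
   node [v] from the annotated term [S]; the condition is vacuous at leaves. *)
Definition lifts_step v S (d : adp R F V * seq term) : Prop :=
  forall p s k, lab v = Some (p, s) ->
  (forall i, lab (i :: v) <> None <-> (i < k)%N) -> (0 < k)%N ->
  [/\ List.In d.1 P,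
      (forall i p' s', lab (i :: v) = Some (p', s') -> lifts (nth t d.2 i) s') &
      exists res, adp_step P S d.1 true res /\
        Permutation.Permutation res [seq (pu.1 / p, pu.2) | pu <- lifted_children d.2 v k]].

Lemma lifted_children_aligned v p k (l : seq (R * term)) :
  (forall i, lab (i :: v) <> None <-> (i < k)%N) ->
  map (@flat_pt R F V) l = [seq (pu.1 / p, pu.2) | pu <- children lab v k] ->
  [seq (pu.1 / p, pu.2) | pu <- lifted_children (map snd l) v k] = l /\
  forall i p' s', lab (i :: v) = Some (p', s') ->
    List.In (nth t (map snd l) i) (map snd l) /\ flat (nth t (map snd l) i) = s'.
Proof.
move=> kids lE; set C := children lab v k in lE.
have [sizeC nthC] := children_nth (0, t) kids.
have sizel : size l = k by rewrite -(size_map (@flat_pt R F V)) lE size_map sizeC.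
have nth_l i : (i < k)%N -> nth (0, t) l i = ((nth (0, t) C i).1 / p, (nth (0, t) l i).2) /\
    flat (nth (0, t) l i).2 = (nth (0, t) C i).2.
  move=> ik; have := congr1 (fun s => nth (flat_pt (0, t)) s i) lE.
  rewrite (nth_map (0, t)) ?sizel // (nth_map (0, t)) ?sizeC //.
  by case: (nth (0, t) l i) => q T [<- <-].
pose g w (pu : R * term) := (pu.1, nth t (map snd l) (head 0%N w)).
have [sizeL nthL] := children_nth (0, t) (proj2 (relabel_children g lab v k) kids).
split.
  apply: (@eq_from_nth _ (0, t)); rewrite size_map ?sizeL ?sizel // => i ik.
  rewrite (nth_map (0, t)) ?sizeL // /lifted_children -/g.
  move: (nthL i ik); rewrite /relabel nthC // => -[<-] /=.
  by rewrite (nth_map (0, t)) ?sizel //; case: (nth_l i ik) => <-.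
move=> i p' s' ilab; have ik : (i < k)%N by apply/kids; rewrite ilab.
split; first by apply: In_nth; rewrite size_map sizel.
rewrite (nth_map (0, t)) ?sizel //.
by case: (nth_l i ik) => _ ->; move: (nthC i ik); rewrite /= ilab => -[<-].
Qed.

Lemma lifts_step_exists v p s S :
  lab v = Some (p, s) -> lifts S s -> exists d, lifts_step v S d.
Proof.
move=> vlab [flatS liftS]; have [_ _ _ step_ok] := HT.
case: (pselect (exists k, (forall i, lab (i :: v) <> None <-> (i < k)%N) /\ (0 < k)%N)).
  case=> k [kids k0]; have [res [st perm]] := step_ok _ _ _ _ vlab kids k0.
  rewrite -flatS in st; have [a [res' [aP st' resE lifted_res]]] := step_R_lift HP liftS st.
  have [l [lE perm_l]] : exists l, [seq (pu.1 / p, pu.2) | pu <- children lab v k] =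
      map (@flat_pt R F V) l /\ Permutation.Permutation res' l.
    apply: Permutation.Permutation_map_inv; rewrite -map_List_map resE.
    exact: Permutation.Permutation_sym.
  have [childrenE lifts_child] := lifted_children_aligned kids (esym lE).
  exists (a, map snd l) => p0 s0 k' + kids' _; rewrite vlab => -[<- _].
  rewrite -(bound_iff_unique kids kids').
  split=> //=; last by exists res'; rewrite childrenE.
  move=> i p' s' /lifts_child [/In_map_iff [pu [<- pul]] <-]; split=> //.
  apply: lifted_res; apply: Permutation.Permutation_in pul.
  exact: Permutation.Permutation_sym.
move=> leaf; exists (ADP t [::] true, [::]) => p0 s0 k _ kids k0.
by case: leaf; exists k.
Qed.

(* The junk default is never used on nodes of the RST ([lifts_step_exists]). *)
Definition lift_choice v S : adp R F V * seq term :=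
  if pselect (exists d, lifts_step v S d) is left H then projT1 (cid H)
  else (ADP t [::] true, [::]).

Lemma lift_choiceP v S : (exists d, lifts_step v S d) -> lifts_step v S (lift_choice v S).
Proof. by rewrite /lift_choice; case: pselect => // H _; exact: projT2 (cid H). Qed.

Fixpoint lift_term v : term :=
  if v is i :: w then nth t (lift_choice w (lift_term w)).2 i else sharp_root t.

Definition lift_lab := relabel (fun v (pu : R * term) => (pu.1, lift_term v)) lab.

Definition lift_info v := ((lift_choice v (lift_term v)).1, true).

Hypothesis bt : wf ar D t && basic D t.

Lemma lifts_lift_term v p s : lab v = Some (p, s) -> lifts (lift_term v) s.
Proof.
have [[_ parent_ok count_ok] root _ _] := HT.
elim: v p s => [|i w IH] p s vlab.
  move: vlab; rewrite root => -[_ <-].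
  by split; [exact: flat_sharp_root (proj2 (andP bt)) | exact: lifted_sharp_root].
have wl : lab w <> None by apply: (parent_ok w i); rewrite vlab.
have [k kids] := count_ok w wl; case wlab: (lab w) wl => [[p0 s0]|] // _.
have ik : (i < k)%N by apply/kids; rewrite vlab.
have [_ lifts_child _] := lift_choiceP (lifts_step_exists wlab (IH _ _ wlab)) wlab kids
  (leq_ltn_trans (leq0n i) ik).
exact: lifts_child vlab.
Qed.

Lemma lift_step v p s : lab v = Some (p, s) ->
  lifts_step v (lift_term v) (lift_choice v (lift_term v)).
Proof.
by move=> vlab; apply/lift_choiceP/(lifts_step_exists vlab)/(lifts_lift_term vlab).
Qed.

Lemma isChainTree_lift : isChainTree ar P lift_lab lift_info (sharp_root t).
Proof.
have [tree root lab_ok _] := HT; split.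
- exact: is_tree_relabel.
- by rewrite /lift_lab /relabel root.
- move=> v p u; rewrite /lift_lab /relabel; case vlab: (lab v) => [[p' s]|] //= [<- <-].
  have [p01 _] := lab_ok _ _ _ vlab; split=> //; rewrite defsP_ADPs.
  by have [_ /andP [_]] := lifts_lift_term vlab.
- move=> v p u k; rewrite {1}/lift_lab /relabel.
  case vlab: (lab v) => [[p' s]|] //= [<- <-] /relabel_children kids k0.
  by have [_ _ [res [st perm]]] := lift_step vlab vlab kids k0; exists res.
Qed.

Lemma edlPS_lift : edlPS P lift_lab lift_info = edl lab.
Proof.
have [[_ _ count_ok] _ _ _] := HT.
rewrite /edlPS (eq_esum (b := fun v => (lab_p (lab v))%:E)); last first.
  by move=> v _; rewrite lab_p_relabel.
congr esum; apply/seteqP; split=> v /=; first by case=> /inner_relabel.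
move=> /[dup] vin [vl [i il]]; split; first exact/inner_relabel.
have [k kids] := count_ok v vl; case vlab: (lab v) vl => [[p s]|] // _.
have ik : (i < k)%N by apply/kids.
by have [aP _ _] := lift_step vlab vlab kids (leq_ltn_trans (leq0n i) ik).
Qed.

End LiftRST.

Lemma edh_le_edhPS_ADPs (R : realType) (F : finType) (ar : F -> nat) (V : Type)
    (Rs : seq (rule R F V)) (t : term F V) :
  is_PTRS ar Rs -> wf ar (defsR Rs) t && basic (defsR Rs) t ->
  (edh ar Rs t <= edhPS ar (ADPs Rs) (ADPs Rs) t)%E.
Proof.
move=> HP bt; apply: ge_ereal_sup => _ [lab HT <-].
rewrite -(edlPS_lift HP HT bt); apply: ereal_sup_ubound.
by exists (lift_lab ar Rs t lab, lift_info ar Rs t lab) => //; exact: isChainTree_lift.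
Qed.

Theorem mainTheorem1 (R : realType) (F : finType) (ar : F -> nat) (V : Type)
    (Rs : seq (rule R F V)) :
  is_PTRS ar Rs ->
  (forall t : term F V,
      wf ar (defsR Rs) t && basic (defsR Rs) t ->
      edh ar Rs t = edhPS ar (ADPs Rs) (ADPs Rs) t) /\
  iotaC (eirc ar Rs) = iotaC (eircPS ar (ADPs Rs) (ADPs Rs)).
Proof.
move=> HP.
have edhE t : wf ar (defsR Rs) t && basic (defsR Rs) t ->
    edh ar Rs t = edhPS ar (ADPs Rs) (ADPs Rs) t.
  move=> bt; apply/le_anti/andP; split; first exact: edh_le_edhPS_ADPs.
  exact: (edhPS_ADPs_le_edh HP (proj2 (andP bt))).
split=> //; congr iotaC; apply: funext => n.
rewrite /eirc /eircPS defsP_ADPs; congr ereal_sup.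
by apply: eq_imagel => t /andP [/edhE].
Qed.
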